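(* Let $m\ge 2$ and $n_0\ge 1$. There exist $m+1$ $(Q_{n_0},Q_m)$-saturated graphs $A_1,\dots,A_{m+1}$ such that every $(m-1)$-dimensional subcube of $Q_{n_0}$ is contained in at least one $A_i$. (For instance, $A_i$ may be taken to be any $(Q_{n_0},Q_m)$-saturated graph containing all edges whose lower-weight endpoint has weight congruent modulo $m+1$ to one of $i,i+1,\dots,i+m-2$.)
   Context: $Q_n$ is the hypercube on $\{0,1\}^n$ with edges between vertices differing in exactly one coordinate. The weight of a vertex is its number of coordinates equal to $1$. A subcube of dimension $d$ is a set $\{x: x_j=a_j \ \forall j\in J\}$ with $|J|=n-d$, with its induced edges; a graph contains it if it contains all those edges. A graph $G$ is $(Q_n,Q_m)$-saturated if $G\subseteq Q_n$, $G$ contains no subgraph isomorphic to $Q_m$, and adding any edge of $E(Q_n)\setminus E(G)$ creates such a subgraph. *)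

From mathcomp Require Import all_boot.
Set Implicit Arguments. Unset Strict Implicit. Unset Printing Implicit Defensive.

Definition vert (n : nat) := {ffun 'I_n -> bool}.

Definition hadj (n : nat) (x y : vert n) : bool := #|[set i | x i != y i]| == 1.

Definition cube_edges (n : nat) : {set {set vert n}} :=
  [set [set x.1; x.2] | x in [set p : vert n * vert n | hadj p.1 p.2]].

Definition contains_Q (n m : nat) (G : {set {set vert n}}) : Prop :=
  exists f : vert m -> vert n, injective f /\
    forall u v : vert m, hadj u v -> [set f u; f v] \in G.

Definition saturated (n m : nat) (G : {set {set vert n}}) : Prop :=
  [/\ G \subset cube_edges n,
      ~ contains_Q m G &
      forall e, e \in cube_edges n -> e \notin G -> contains_Q m (e |: G)].

Definition contains_subcube (n : nat) (J : {set 'I_n}) (a : vert n)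
    (G : {set {set vert n}}) : Prop :=
  forall x y : vert n, hadj x y ->
    (forall j, j \in J -> x j = a j) -> (forall j, j \in J -> y j = a j) ->
    [set x; y] \in G.

From mathcomp Require Import all_boot boolp zify.
Set Implicit Arguments. Unset Strict Implicit. Unset Printing Implicit Defensive.

(* Extend the band graph B_i, made of the cube edges whose lower endpoint has
   weight congruent to one of i, ..., i+m-2 modulo m+1, to a saturated graph A_i.
   The subcube with fixed coordinates (J, a) occupies the m consecutive weight
   levels starting at w = #{j in J | a j}, so its edges all lie in B_i for
   i = w mod (m+1).  B_i contains no Q_m: if u0 minimises the weight of the
   image of an embedding f of Q_m, a 4-cycle argument gives
   wt (f x) = wt (f u0) + d(u0, x), so the image has edges on m consecutive
   levels, while two of any m+1 consecutive levels are missing from B_i. *)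

Definition wt n (x : vert n) : nat := #|[set k | x k]|.

Definition hdist n (x y : vert n) : nat := #|[set k | x k != y k]|.

Definition flip n (x : vert n) (k : 'I_n) : vert n :=
  [ffun j => if j == k then ~~ x j else x j].

Lemma card_toggle n (P : pred 'I_n) k :
  #|[set j | if j == k then ~~ P j else P j]| =
  if P k then #|[set j | P j]|.-1 else #|[set j | P j]|.+1.
Proof.
case Pk: (P k).
- have -> : [set j | if j == k then ~~ P j else P j] = [set j | P j] :\ k.
    by apply/setP => j; rewrite !inE; case: eqP => [->|]; rewrite ?Pk.
  by rewrite (cardsD1 k [set j | P j]) inE Pk.
- have -> : [set j | if j == k then ~~ P j else P j] = k |: [set j | P j].
    by apply/setP => j; rewrite !inE; case: eqP => [->|]; rewrite ?Pk.
  by rewrite cardsU1 inE Pk.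
Qed.

Lemma wt_flip n (x : vert n) k :
  wt (flip x k) = if x k then (wt x).-1 else (wt x).+1.
Proof.
rewrite /wt -(card_toggle (fun j => x j)).
by apply: eq_card => j; rewrite !inE ffunE.
Qed.

Lemma hdist_flip n (u x : vert n) k :
  hdist u (flip x k) = if u k != x k then (hdist u x).-1 else (hdist u x).+1.
Proof.
rewrite /hdist -(card_toggle (fun j => u j != x j)).
by apply: eq_card => j; rewrite !inE ffunE; case: (j == k); case: (u j); case: (x j).
Qed.

Lemma hdist_eq0 n (x y : vert n) : hdist x y = 0 -> x = y.
Proof.
move/eqP; rewrite cards_eq0 => /eqP D; apply/ffunP => j.
by have /setP /(_ j) := D; rewrite !inE => /negbFE /eqP.
Qed.

Lemma flipK n (x : vert n) k : flip (flip x k) k = x.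
Proof. by apply/ffunP => j; rewrite !ffunE; case: eqP => // _; rewrite negbK. Qed.

Lemma flipC n (x : vert n) a b : flip (flip x a) b = flip (flip x b) a.
Proof. by apply/ffunP => j; rewrite !ffunE; case: (j == a); case: (j == b). Qed.

Lemma hadj_flip n (x : vert n) k : hadj x (flip x k).
Proof.
apply/cards1P; exists k; apply/setP => j; rewrite !inE ffunE.
by case: (j == k); case: (x j).
Qed.

Lemma hadj_exists_flip n (x y : vert n) : hadj x y -> exists k, y = flip x k.
Proof.
move=> /cards1P [k Dk]; exists k; apply/ffunP => j; rewrite ffunE.
have /setP /(_ j) := Dk; rewrite !inE.
by case: (j == k); case: (x j) (y j) => [] [].
Qed.

Lemma hadj_sym n (x y : vert n) : hadj x y = hadj y x.
Proof.
by rewrite /hadj (eq_card (B := [set i | y i != x i])) // => j; rewrite !inE eq_sym.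
Qed.

Lemma wt_adj n (x y : vert n) : hadj x y -> wt y = (wt x).+1 \/ wt x = (wt y).+1.
Proof.
case/hadj_exists_flip => k ->; rewrite wt_flip.
case xk: (x k); [right | by left].
suff: 0 < wt x by case: (wt x).
by apply/card_gt0P; exists k; rewrite inE xk.
Qed.

Lemma common_neighbour n (t x : vert n) a b : a != b ->
  hadj (flip t a) x -> hadj (flip t b) x -> x != t -> x = flip (flip t a) b.
Proof.
move=> ab /hadj_exists_flip [c ->] hb.
have [-> | ca] := eqVneq c a; first by rewrite flipK eqxx.
have [-> // | cb] := eqVneq c b; move=> _; exfalso.
have /negbTE ac : a != c by rewrite eq_sym.
have /negbTE bc : b != c by rewrite eq_sym.
have /negbTE ba : b != a by rewrite eq_sym.
have : [set a; b] \subset [set i | flip t b i != flip (flip t a) c i].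
  apply/subsetP => i /set2P [] ->; rewrite inE !ffunE eqxx.
  - by rewrite (negbTE ab) ac; case: (t a).
  - by rewrite ba bc; case: (t b).
by move/subset_leq_card; rewrite cards2 ab (eqP hb).
Qed.

Lemma wt_flip2 n (t : vert n) a b : a != b -> t a = false -> t b = false ->
  wt (flip (flip t a) b) = (wt t).+2.
Proof. by move=> ab ta tb; rewrite wt_flip ffunE eq_sym (negbTE ab) tb wt_flip ta. Qed.

Section CubeHomomorphism.

Variables (m n : nat) (f : vert m -> vert n).
Hypothesis f_inj : injective f.
Hypothesis f_hadj : forall u v, hadj u v -> hadj (f u) (f v).

Lemma wt_image_square t a b : a != b ->
  wt (f (flip t a)) = (wt (f t)).+1 -> wt (f (flip t b)) = (wt (f t)).+1 ->
  wt (f (flip (flip t a) b)) = (wt (f t)).+2.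
Proof.
move=> ab wa wb.
have [a' Ea'] := hadj_exists_flip (f_hadj (hadj_flip t a)).
have [b' Eb'] := hadj_exists_flip (f_hadj (hadj_flip t b)).
have ta' : f t a' = false by move: wa; rewrite Ea' wt_flip; case: (f t a') => //; lia.
have tb' : f t b' = false by move: wb; rewrite Eb' wt_flip; case: (f t b') => //; lia.
have a'b' : a' != b'.
  apply/eqP => e; have : flip t a = flip t b by apply: f_inj; rewrite Ea' Eb' e.
  by move/ffunP/(_ a); rewrite !ffunE eqxx (negbTE ab); case: (t a).
set x := flip (flip t a) b.
have xt : f x != f t.
  apply/eqP => /f_inj /ffunP /(_ b); rewrite !ffunE eqxx eq_sym (negbTE ab).
  by case: (t b).
have hxa : hadj (flip (f t) a') (f x) by rewrite -Ea'; exact/f_hadj/hadj_flip.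
have hxb : hadj (flip (f t) b') (f x) by rewrite -Eb' /x flipC; exact/f_hadj/hadj_flip.
by rewrite (common_neighbour a'b' hxa hxb xt) wt_flip2.
Qed.

Lemma wt_image_hdist u0 : (forall u, wt (f u0) <= wt (f u)) ->
  forall x, wt (f x) = wt (f u0) + hdist u0 x.
Proof.
move=> u0_min.
suff wt_d d x : hdist u0 x = d -> wt (f x) = wt (f u0) + d by move=> x; apply: wt_d.
elim/ltn_ind: d x => d IH x dx; case: d IH dx => [|[|d]] IH dx.
- by rewrite -(hdist_eq0 dx) addn0.
- have /f_hadj/wt_adj [-> | ] : hadj u0 x by exact/eqP.
    by rewrite addn1.
  by have := u0_min x; lia.
- have [a aD] : exists a, a \in [set k | u0 k != x k].
    by apply/card_gt0P; rewrite -/(hdist _ _) dx.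
  have /card_gt0P [b] : 0 < #|[set k | u0 k != x k] :\ a|.
    by move: dx; rewrite /hdist (cardsD1 a) aD; lia.
  rewrite !inE => /andP [ba bD]; rewrite inE in aD.
  set t := flip (flip x a) b.
  have tA : flip t a = flip x b by rewrite /t flipC flipK.
  have tB : flip t b = flip x a by rewrite /t flipK.
  have dxa : hdist u0 (flip x a) = d.+1 by rewrite hdist_flip aD dx.
  have dxb : hdist u0 (flip x b) = d.+1 by rewrite hdist_flip bD dx.
  have dt : hdist u0 t = d by rewrite hdist_flip ffunE (negbTE ba) bD dxa.
  have wxa := IH _ (ltnSn _) _ dxa; have wxb := IH _ (ltnSn _) _ dxb.
  have wt_t := IH _ (leqW (ltnSn _)) _ dt.
  have -> : x = flip (flip t a) b by rewrite tA flipK.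
  by rewrite wt_image_square ?wt_t ?tA ?tB ?wxa ?wxb ?addnS // eq_sym.
Qed.

End CubeHomomorphism.

Lemma set2_eq (T : finType) (x y p q : T) :
  [set x; y] = [set p; q] -> (x = p /\ y = q) \/ (x = q /\ y = p).
Proof.
move=> E.
have /set2P [xE | xE] : x \in [set p; q] by rewrite -E set21.
all: have /set2P [yE | yE] : y \in [set p; q] by rewrite -E set22.
all: rewrite xE yE in E *; try by [left | right].
all: move: (set21 p q) (set22 p q); rewrite -E !inE !orbb => /eqP ? /eqP ?.
all: by left; split; congruence.
Qed.

Lemma cube_edge_hadj n (x y : vert n) : [set x; y] \in cube_edges n -> hadj x y.
Proof.
case/imsetP => -[p q]; rewrite inE /= => hpq /set2_eq [] [-> ->] //.
by rewrite hadj_sym.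
Qed.

Definition level_graph n (S : pred nat) : {set {set vert n}} :=
  [set [set p.1; p.2] |
     p in [set p : vert n * vert n | hadj p.1 p.2 && S (minn (wt p.1) (wt p.2))]].

Lemma level_graph_sub n (S : pred nat) : level_graph n S \subset cube_edges n.
Proof.
apply/subsetP => e /imsetP [p]; rewrite inE => /andP [hp _] ->.
by apply/imsetP; exists p; rewrite ?inE.
Qed.

Lemma mem_level_graph n (S : pred nat) (x y : vert n) :
  hadj x y -> S (minn (wt x) (wt y)) -> [set x; y] \in level_graph n S.
Proof. by move=> hxy Sxy; apply/imsetP; exists (x, y); rewrite ?inE ?hxy. Qed.

Lemma level_graph_min n (S : pred nat) (x y : vert n) :
  [set x; y] \in level_graph n S -> S (minn (wt x) (wt y)).
Proof.
case/imsetP => -[p q]; rewrite inE /= => /andP [_ Spq] /set2_eq [] [-> ->] //.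
by rewrite minnC.
Qed.

Lemma exists_agree n (u v : vert n) : hdist u v < n -> exists k, u k = v k.
Proof.
have := cardsC [set k | u k != v k]; rewrite card_ord -/(hdist u v) => uvC uvn.
have /card_gt0P [k] : 0 < #|~: [set k | u k != v k]| by lia.
by rewrite !inE negbK => /eqP; exists k.
Qed.

Lemma exists_hdist n (u : vert n) j : j <= n -> exists v, hdist u v = j.
Proof.
elim: j => [_ | j IH jn].
  by exists u; apply/eqP; rewrite cards_eq0; apply/eqP/setP => k; rewrite !inE eqxx.
have [v uv] := IH (ltnW jn).
have [k ukv] : exists k, u k = v k by apply: exists_agree; rewrite uv.
by exists (flip v k); rewrite hdist_flip ukv eqxx uv.
Qed.

Lemma level_graph_Q_levels n m (S : pred nat) :
  contains_Q m (level_graph n S) -> exists w, forall j, j < m -> S (w + j).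
Proof.
case=> f [f_inj fS].
have f_hadj u v : hadj u v -> hadj (f u) (f v).
  by move/fS/(subsetP (level_graph_sub _ S))/cube_edge_hadj.
have [u0 _ u0_min] := @arg_minnP _ [ffun => false] predT (fun u => wt (f u)) isT.
have wtE := wt_image_hdist f_inj f_hadj (fun u => u0_min u isT).
exists (wt (f u0)) => j jm.
have [v uv] := exists_hdist u0 (ltnW jm).
have [k ukv] : exists k, u0 k = v k by apply: exists_agree; rewrite uv.
have := level_graph_min (fS _ _ (hadj_flip v k)).
rewrite (wtE v) (wtE (flip v k)) hdist_flip ukv eqxx /= uv.
by rewrite addnS (minn_idPl (leqnSn _)).
Qed.

Lemma saturated_superset n m (G : {set {set vert n}}) :
  G \subset cube_edges n -> ~ contains_Q m G -> {A | saturated m A & G \subset A}.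
Proof.
move=> Gsub GQ.
pose P := [pred A : {set {set vert n}} |
             (A \subset cube_edges n) && `[< ~ contains_Q m A >]].
have [A /maxsetP [/andP [Asub /asboolP AQ] Amax] GA] : {A | maxset P A & G \subset A}.
  by apply: maxset_exists; rewrite inE Gsub; apply/asboolP.
exists A => //; split => // e e_edge eA; apply: contrapT => eAQ.
have eAA : e |: A = A.
  by apply: Amax (subsetUr _ _); rewrite inE subUset sub1set e_edge Asub; apply/asboolP.
by move: eA; rewrite -eAA setU11.
Qed.

(* For [i <= m], [k] is congruent to one of [i, i+1, ..., i+m-2] modulo [m+1]. *)
Definition residue_band m i : pred nat := fun k => (k + m.+1 - i) %% m.+1 < m.-1.

Lemma residue_band_gap m i w : 0 < m -> i <= m ->
  exists2 j, j < m & ~~ residue_band m i (w + j).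
Proof.
move=> m0 im; set s := (w + m.+1 - i) %% m.+1.
have sm : s < m.+1 := ltn_pmod _ (ltn0Sn m).
have E j : (w + j + m.+1 - i) %% m.+1 = (s + j) %% m.+1.
  by rewrite /s modnDml; congr (_ %% _); lia.
rewrite /residue_band; case: (ltnP s m) => sm'.
  by exists (m.-1 - s); [lia | rewrite -leqNgt E modn_small; lia].
by exists 0; [lia | rewrite -leqNgt E addn0 modn_small; lia].
Qed.

Lemma residue_band_mod m w k : w <= k -> k < w + m.-1 -> residue_band m (w %% m.+1) k.
Proof.
move=> wk kw; rewrite /residue_band.
have -> : k + m.+1 - w %% m.+1 = (w %/ m.+1).+1 * m.+1 + (k - w).
  by have := divn_eq w m.+1; have := ltn_pmod w (ltn0Sn m); rewrite mulSnr; lia.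
by rewrite modnMDl modn_small; lia.
Qed.

Lemma level_graph_band_Qfree n m i : 0 < m -> i <= m ->
  ~ contains_Q m (level_graph n (residue_band m i)).
Proof.
move=> m0 im /level_graph_Q_levels [w Sw].
by have [j /Sw ->] := residue_band_gap w m0 im.
Qed.

Lemma wt_subcube n (J : {set 'I_n}) (a z : vert n) :
  (forall j, j \in J -> z j = a j) ->
  #|[set j in J | a j]| <= wt z <= #|[set j in J | a j]| + (n - #|J|).
Proof.
move=> za; rewrite /wt -(cardsID J [set k | z k]).
have -> : [set k | z k] :&: J = [set j in J | a j].
  by apply/setP => j; rewrite !inE andbC; case: (boolP (j \in J)) => // /za ->.
have : #|[set k | z k] :\: J| <= #|~: J|.
  by apply: subset_leq_card; rewrite setDE subsetIr.
have -> : n - #|J| = #|~: J|.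
  by have := cardsC J; rewrite card_ord; move: #|J| #|~: J| => p q <-; rewrite addKn.
by rewrite leq_addr leq_add2l.
Qed.

Theorem mainTheorem5 (m n0 : nat) : 2 <= m -> 1 <= n0 ->
  exists A : 'I_m.+1 -> {set {set vert n0}},
    (forall i, saturated m (A i)) /\
    (forall (J : {set 'I_n0}) (a : vert n0),
        #|J| + (m - 1) = n0 -> exists i, contains_subcube J a (A i)).
Proof.
move=> m2 _.
pose B (i : 'I_m.+1) := level_graph n0 (residue_band m i).
have B_free i : ~ contains_Q m (B i).
  by apply: level_graph_band_Qfree; [lia | rewrite -ltnS].
exists (fun i => s2val (saturated_superset (level_graph_sub _ _) (B_free i))).
split => [i | J a Jm]; first by case: saturated_superset.
exists (Ordinal (ltn_pmod #|[set j in J | a j]| (ltn0Sn m))).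
case: saturated_superset => A _ /subsetP BA x y xy xJ yJ /=.
apply/BA/mem_level_graph => //.
have := wt_subcube xJ; have := wt_subcube yJ; have := wt_adj xy.
by move=> ? ? ?; apply: residue_band_mod; lia.
Qed.
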